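(* Let $(X,d,\preceq)$ be an ordered metric space such that $(X,d)$ is complete, and let $f,g:X\to X$. Suppose: (i) $f(X)\subseteq g(X)$; (ii) $f$ is $g$-comparable; (iii) the pair $(f,g)$ is compatible; (iv) $g$ is continuous; (v) either $f$ is continuous or $(X,d,\preceq)$ has the $g$-TCC property; (vi) there exists $x_0\in X$ such that $g(x_0)\prec\succ f(x_0)$; (vii) there exists $\alpha\in[0,1)$ such that $d(fx,fy)\le \alpha\, d(gx,gy)$ for all $x,y\in X$ with $g(x)\prec\succ g(y)$. Then $f$ and $g$ have a coincidence point, i.e. there is $x\in X$ with $g(x)=f(x)$.
   Context: An ordered metric space $(X,d,\preceq)$ is a nonempty set $X$ with a metric $d$ and a partial order $\preceq$. For $x,y\in X$, write $x\prec\succ y$ (''comparable'') if $x\preceq y$ or $y\preceq x$. For self-maps $f,g$ of $X$: $f$ is $g$-comparable if for all $x,y\in X$, $g(x)\prec\succ g(y)$ implies $f(x)\prec\succ f(y)$. The pair $(f,g)$ is compatible if $\lim_{n\to\infty} d(gfx_n,fgx_n)=0$ whenever $\{x_n\}$ is a sequence in $X$ such that $\{g(x_n)\}$ and $\{f(x_n)\}$ converge to the same point of $X$. A sequence $\{x_n\}$ is termwise monotone if $x_n\prec\succ x_{n+1}$ for all $n\ge 0$. $(X,d,\preceq)$ has the $g$-TCC property if for every termwise monotone sequence $\{x_n\}$ in $X$ converging (in $d$) to some $x\in X$ there is a subsequence $\{x_{n_k}\}$ with $g(x_{n_k})\prec\succ g(x)$ for all $k$. A coincidence point of $f,g$ is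 $x\in X$ with $g(x)=f(x)$. *)

From Stdlib Require Import Reals.
Open Scope R_scope.

Record is_metric {X : Type} (d : X -> X -> R) : Prop := {
  metric_nonneg : forall x y, 0 <= d x y;
  metric_eq0 : forall x y, d x y = 0 <-> x = y;
  metric_sym : forall x y, d x y = d y x;
  metric_triangle : forall x y z, d x z <= d x y + d y z
}.

Record is_partial_order {X : Type} (le : X -> X -> Prop) : Prop := {
  po_refl : forall x, le x x;
  po_antisym : forall x y, le x y -> le y x -> x = y;
  po_trans : forall x y z, le x y -> le y z -> le x z
}.

Definition seq_converges {X : Type} (d : X -> X -> R) (u : nat -> X) (x : X) : Prop :=
  forall eps, eps > 0 -> exists N, forall n, (n >= N)%nat -> d (u n) x < eps.

Definition is_Cauchy {X : Type} (d : X -> X -> R) (u : nat -> X) : Prop :=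
  forall eps, eps > 0 -> exists N, forall m n, (m >= N)%nat -> (n >= N)%nat ->
    d (u m) (u n) < eps.

Definition complete_metric {X : Type} (d : X -> X -> R) : Prop :=
  forall u : nat -> X, is_Cauchy d u -> exists x, seq_converges d u x.

Definition metric_continuous {X : Type} (d : X -> X -> R) (h : X -> X) : Prop :=
  forall x eps, eps > 0 -> exists delta, delta > 0 /\
    forall y, d x y < delta -> d (h x) (h y) < eps.

Definition comparable {X : Type} (le : X -> X -> Prop) (x y : X) : Prop :=
  le x y \/ le y x.

Definition g_comparable {X : Type} (le : X -> X -> Prop) (f g : X -> X) : Prop :=
  forall x y, comparable le (g x) (g y) -> comparable le (f x) (f y).

Definition compatible_pair {X : Type} (d : X -> X -> R) (f g : X -> X) : Prop :=
  forall (u : nat -> X) (z : X),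
    seq_converges d (fun n => g (u n)) z ->
    seq_converges d (fun n => f (u n)) z ->
    Un_cv (fun n => d (g (f (u n))) (f (g (u n)))) 0.

Definition termwise_monotone {X : Type} (le : X -> X -> Prop) (u : nat -> X) : Prop :=
  forall n, comparable le (u n) (u (S n)).

Definition g_TCC {X : Type} (d : X -> X -> R) (le : X -> X -> Prop) (g : X -> X) : Prop :=
  forall (u : nat -> X) (x : X),
    termwise_monotone le u -> seq_converges d u x ->
    exists phi : nat -> nat,
      (forall k, (phi k < phi (S k))%nat) /\
      forall k, comparable le (g (u (phi k))) (g x).

(** Picard–Jungck iteration: choose [x_{n+1}] with [g x_{n+1} = f x_n], possible since
    [f(X) ⊆ g(X)].  Starting from a point with [g x_0] comparable to [f x_0],
    [g]-comparability of [f] makes consecutive terms [g x_n] comparable, so the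
    contraction applies along the sequence and [d (g x_{n+1}) (g x_{n+2}) <= α d (g x_n) (g x_{n+1})];
    hence [g x_n] is Cauchy and converges to some [z].  Compatibility makes
    [g (f x_n)] and [f (g x_n)] asymptotically equal; the first tends to [g z] by
    continuity of [g], the second to [f z], either by continuity of [f] or, under
    [g]-TCC, along a subsequence where [g (g x_n)] is comparable to [g z] so that
    the contraction controls [d (f (g x_n)) (f z)]. *)

From Stdlib Require Import Reals Lra Lia ClassicalEpsilon.
Open Scope R_scope.

Lemma Un_cv_const (c : R) : Un_cv (fun _ => c) c.
Proof.
  intros eps Heps; exists 0%nat; intros n _.
  rewrite R_dist_eq; exact Heps.
Qed.

Lemma Un_cv_0_squeeze (u v : nat -> R) :
  (forall n, 0 <= v n <= u n) -> Un_cv u 0 -> Un_cv v 0.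
Proof.
  intros Huv Hu eps Heps.
  destruct (Hu eps Heps) as [N HN]; exists N; intros n Hn.
  specialize (HN n Hn); specialize (Huv n).
  unfold R_dist in *; rewrite Rminus_0_r in *.
  rewrite Rabs_right in HN by lra; rewrite Rabs_right by lra; lra.
Qed.

Lemma strictly_increasing_ge (phi : nat -> nat) :
  (forall k, (phi k < phi (S k))%nat) -> forall k, (k <= phi k)%nat.
Proof. intros Hphi k; induction k; [lia|]; specialize (Hphi k); lia. Qed.

Lemma Un_cv_subseq (u : nat -> R) (l : R) (phi : nat -> nat) :
  (forall k, (phi k < phi (S k))%nat) -> Un_cv u l -> Un_cv (fun k => u (phi k)) l.
Proof.
  intros Hphi Hu eps Heps.
  destruct (Hu eps Heps) as [N HN]; exists N; intros k Hk.
  apply HN; pose proof (strictly_increasing_ge phi Hphi k); lia.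
Qed.

Section MetricSequences.

Context {X : Type} (d : X -> X -> R) (Hd : is_metric d).

Lemma seq_converges_Un_cv (u : nat -> X) (x : X) :
  seq_converges d u x <-> Un_cv (fun n => d (u n) x) 0.
Proof.
  split; intros Hu eps Heps; destruct (Hu eps Heps) as [N HN]; exists N;
    intros n Hn; specialize (HN n Hn); pose proof (metric_nonneg d Hd (u n) x);
    unfold R_dist in *; rewrite Rminus_0_r, Rabs_right in * by lra; exact HN.
Qed.

Lemma seq_converges_shift (u : nat -> X) (x : X) :
  seq_converges d u x -> seq_converges d (fun n => u (S n)) x.
Proof.
  intros Hu eps Heps; destruct (Hu eps Heps) as [N HN].
  exists N; intros n Hn; apply HN; lia.
Qed.

Lemma seq_converges_subseq (u : nat -> X) (x : X) (phi : nat -> nat) :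
  (forall k, (phi k < phi (S k))%nat) ->
  seq_converges d u x -> seq_converges d (fun k => u (phi k)) x.
Proof.
  rewrite !seq_converges_Un_cv; intros Hphi Hu.
  exact (Un_cv_subseq (fun n => d (u n) x) 0 phi Hphi Hu).
Qed.

Lemma seq_converges_dominated (u v : nat -> X) (a b : X) (c : R) :
  0 <= c -> (forall n, d (v n) b <= c * d (u n) a) ->
  seq_converges d u a -> seq_converges d v b.
Proof.
  rewrite !seq_converges_Un_cv; intros Hc Hvu Hu.
  apply (Un_cv_0_squeeze (fun n => c * d (u n) a)).
  - intro n; split; [apply (metric_nonneg d Hd) | apply Hvu].
  - rewrite <- (Rmult_0_r c); apply CV_mult; [apply Un_cv_const | exact Hu].
Qed.

Lemma metric_continuous_seq_converges (h : X -> X) (u : nat -> X) (x : X) :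
  metric_continuous d h -> seq_converges d u x ->
  seq_converges d (fun n => h (u n)) (h x).
Proof.
  intros Hh Hu eps Heps.
  destruct (Hh x eps Heps) as [delta [Hdelta Hclose]].
  destruct (Hu delta Hdelta) as [N HN]; exists N; intros n Hn.
  rewrite (metric_sym d Hd); apply Hclose.
  rewrite (metric_sym d Hd); exact (HN n Hn).
Qed.

Lemma seq_converges_eq_of_dist_cv0 (u v : nat -> X) (a b : X) :
  seq_converges d u a -> seq_converges d v b ->
  Un_cv (fun n => d (u n) (v n)) 0 -> a = b.
Proof.
  rewrite !seq_converges_Un_cv; intros Hu Hv Huv.
  apply (metric_eq0 d Hd).
  assert (Hbound : forall n, d a b <= d (u n) a + d (u n) (v n) + d (v n) b).
  { intro n; rewrite (metric_sym d Hd (u n) a).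
    pose proof (metric_triangle d Hd a (u n) b).
    pose proof (metric_triangle d Hd (u n) (v n) b); lra. }
  assert (Hlim : Un_cv (fun n => d (u n) a + d (u n) (v n) + d (v n) b) 0).
  { rewrite <- (Rplus_0_r 0) at 1; rewrite <- (Rplus_0_r 0) at 1.
    apply CV_plus; [apply CV_plus|]; assumption. }
  pose proof (Rle_cv_lim Hbound (Un_cv_const (d a b)) Hlim).
  pose proof (metric_nonneg d Hd a b); lra.
Qed.

Section ContractiveSteps.

Variables (y : nat -> X) (alpha : R).
Hypotheses (Halpha0 : 0 <= alpha) (Halpha1 : alpha < 1).
Hypothesis Hstep :
  forall n, d (y (S n)) (y (S (S n))) <= alpha * d (y n) (y (S n)).

Lemma dist_step_le_geometric (n : nat) :
  d (y n) (y (S n)) <= alpha ^ n * d (y 0%nat) (y 1%nat).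
Proof.
  induction n as [|n IH]; simpl; [lra|].
  pose proof (Rmult_le_compat_l alpha _ _ Halpha0 IH).
  pose proof (Hstep n); lra.
Qed.

(* The partial geometric sum, multiplied through by [1 - alpha] to avoid division. *)
Lemma dist_le_geometric_sum (m k : nat) :
  d (y m) (y (m + k)%nat) * (1 - alpha)
    <= d (y 0%nat) (y 1%nat) * (alpha ^ m - alpha ^ (m + k)).
Proof.
  induction k as [|k IH].
  - rewrite Nat.add_0_r, (proj2 (metric_eq0 d Hd _ _) eq_refl); lra.
  - rewrite Nat.add_succ_r.
    pose proof (metric_triangle d Hd (y m) (y (m + k)%nat) (y (S (m + k)))) as Htri.
    pose proof (dist_step_le_geometric (m + k)) as Hgeo.
    change (alpha ^ S (m + k)) with (alpha * alpha ^ (m + k)).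
    assert (H1alpha : 0 <= 1 - alpha) by lra.
    pose proof (Rmult_le_compat_r _ _ _ H1alpha Htri).
    pose proof (Rmult_le_compat_r _ _ _ H1alpha Hgeo); nra.
Qed.

Lemma dist_le_geometric_tail (m n : nat) : (m <= n)%nat ->
  d (y m) (y n) * (1 - alpha) <= d (y 0%nat) (y 1%nat) * alpha ^ m.
Proof.
  intro Hmn; replace n with (m + (n - m))%nat by lia.
  pose proof (dist_le_geometric_sum m (n - m)).
  pose proof (pow_le alpha (m + (n - m)) Halpha0).
  pose proof (metric_nonneg d Hd (y 0%nat) (y 1%nat)); nra.
Qed.

Lemma contractive_steps_Cauchy : is_Cauchy d y.
Proof.
  intros eps Heps.
  set (d01 := d (y 0%nat) (y 1%nat)).
  assert (Hd01 : 0 <= d01) by apply (metric_nonneg d Hd).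
  set (c := eps * (1 - alpha) / (d01 + 1)).
  assert (Hc : 0 < c) by (apply Rdiv_lt_0_compat; nra).
  destruct (pow_lt_1_zero alpha ltac:(rewrite Rabs_right; lra) c Hc) as [N HN].
  assert (Hordered : forall m n, (m >= N)%nat -> (m <= n)%nat -> d (y m) (y n) < eps).
  { intros m n Hm Hmn.
    specialize (HN m Hm); rewrite Rabs_right in HN by (apply Rle_ge, pow_le; lra).
    pose proof (dist_le_geometric_tail m n Hmn) as Htail; fold d01 in Htail.
    assert (Hceps : c * (d01 + 1) = eps * (1 - alpha)) by (unfold c; field; lra).
    assert (d01 * alpha ^ m <= d01 * c) by (apply Rmult_le_compat_l; lra).
    apply (Rmult_lt_reg_r (1 - alpha)); nra. }
  exists N; intros m n Hm Hn; destruct (Nat.le_ge_cases m n).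
  - apply Hordered; assumption.
  - rewrite (metric_sym d Hd); apply Hordered; assumption.
Qed.

End ContractiveSteps.

End MetricSequences.

Section JungckIteration.

Context {X : Type} (d : X -> X -> R) (le : X -> X -> Prop) (Hd : is_metric d).
Variables (f g : X -> X) (xs : nat -> X).
Hypothesis Hxs : forall n, g (xs (S n)) = f (xs n).

Lemma jungck_termwise_monotone :
  g_comparable le f g -> comparable le (g (xs 0%nat)) (f (xs 0%nat)) ->
  termwise_monotone le (fun n => g (xs n)).
Proof.
  intros Hfg Hx0 n; induction n as [|n IH]; rewrite !Hxs; [exact Hx0|].
  apply Hfg; exact IH.
Qed.

Lemma jungck_Cauchy (alpha : R) : 0 <= alpha -> alpha < 1 ->
  (forall x y, comparable le (g x) (g y) -> d (f x) (f y) <= alpha * d (g x) (g y)) ->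
  termwise_monotone le (fun n => g (xs n)) ->
  is_Cauchy d (fun n => g (xs n)).
Proof.
  intros Halpha0 Halpha1 Hcontr Hmono.
  apply (contractive_steps_Cauchy d Hd _ alpha Halpha0 Halpha1); intro n.
  rewrite (Hxs (S n)), (Hxs n) at 1; apply Hcontr, Hmono.
Qed.

Variable z : X.
Hypotheses (Hz : seq_converges d (fun n => g (xs n)) z)
  (Hcompat : compatible_pair d f g) (Hg : metric_continuous d g).

Lemma jungck_f_converges : seq_converges d (fun n => f (xs n)) z.
Proof.
  intros eps Heps; destruct (seq_converges_shift d _ _ Hz eps Heps) as [N HN].
  exists N; intros n Hn; rewrite <- Hxs; exact (HN n Hn).
Qed.

Lemma jungck_gf_converges : seq_converges d (fun n => g (f (xs n))) (g z).
Proof. exact (metric_continuous_seq_converges d Hd g _ z Hg jungck_f_converges). Qed.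

Lemma jungck_compatible_cv0 : Un_cv (fun n => d (g (f (xs n))) (f (g (xs n)))) 0.
Proof. exact (Hcompat xs z Hz jungck_f_converges). Qed.

Lemma coincidence_of_continuous : metric_continuous d f -> g z = f z.
Proof.
  intro Hf.
  apply (seq_converges_eq_of_dist_cv0 d Hd
           (fun n => g (f (xs n))) (fun n => f (g (xs n))) _ _ jungck_gf_converges).
  - exact (metric_continuous_seq_converges d Hd f _ z Hf Hz).
  - exact jungck_compatible_cv0.
Qed.

Lemma coincidence_of_g_TCC (alpha : R) : 0 <= alpha ->
  (forall x y, comparable le (g x) (g y) -> d (f x) (f y) <= alpha * d (g x) (g y)) ->
  termwise_monotone le (fun n => g (xs n)) -> g_TCC d le g -> g z = f z.
Proof.
  intros Halpha0 Hcontr Hmono HTCC.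
  destruct (HTCC _ z Hmono Hz) as [phi [Hphi Hcomp]].
  apply (seq_converges_eq_of_dist_cv0 d Hd
           (fun k => g (f (xs (phi k)))) (fun k => f (g (xs (phi k))))).
  - exact (seq_converges_subseq d Hd _ _ phi Hphi jungck_gf_converges).
  - apply (seq_converges_dominated d Hd (fun k => g (g (xs (phi k)))) _ (g z) _ alpha).
    + exact Halpha0.
    + intro k; apply Hcontr, Hcomp.
    + apply (metric_continuous_seq_converges d Hd g _ z Hg).
      exact (seq_converges_subseq d Hd _ _ phi Hphi Hz).
  - exact (Un_cv_subseq _ 0 phi Hphi jungck_compatible_cv0).
Qed.

End JungckIteration.

Theorem theorem3p3 (X : Type) (d : X -> X -> R) (le : X -> X -> Prop)
  (Hne : inhabited X)
  (Hd : is_metric d) (Hle : is_partial_order le) (Hcomplete : complete_metric d)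
  (f g : X -> X)
  (Hi : forall x, exists y, f x = g y)
  (Hii : g_comparable le f g)
  (Hiii : compatible_pair d f g)
  (Hiv : metric_continuous d g)
  (Hv : metric_continuous d f \/ g_TCC d le g)
  (Hvi : exists x0, comparable le (g x0) (f x0))
  (Hvii : exists alpha, 0 <= alpha /\ alpha < 1 /\
     forall x y, comparable le (g x) (g y) -> d (f x) (f y) <= alpha * d (g x) (g y)) :
  exists x, g x = f x.
Proof.
  destruct Hvi as [x0 Hx0].
  destruct Hvii as [alpha [Halpha0 [Halpha1 Hcontr]]].
  destruct (choice (fun x y => f x = g y) Hi) as [h Hh].
  set (xs := fun n => Nat.iter n h x0).
  assert (Hxs : forall n, g (xs (S n)) = f (xs n)) by (intro n; symmetry; apply Hh).
  pose proof (jungck_termwise_monotone le f g xs Hxs Hii Hx0) as Hmono.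
  pose proof (jungck_Cauchy d le Hd f g xs Hxs alpha Halpha0 Halpha1 Hcontr Hmono) as Hcauchy.
  destruct (Hcomplete _ Hcauchy) as [z Hz].
  exists z; destruct Hv as [Hf | HTCC].
  - exact (coincidence_of_continuous d Hd f g xs Hxs z Hz Hiii Hiv Hf).
  - exact (coincidence_of_g_TCC d le Hd f g xs Hxs z Hz Hiii Hiv alpha Halpha0 Hcontr Hmono HTCC).
Qed.
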